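(* Let $n\ge 2$ and $\sigma\ge 0$. The matrix $\mathbf A_\sigma^{-1}\mathbf B$ is diagonalizable over $\mathbb R$, so its eigenvectors form a basis of $\mathbb R^n$. Its eigenvalues are real and, ordered decreasingly, satisfy $$1\ \ge\ \lambda_1(\mathbf A_\sigma^{-1}\mathbf B)\ \ge\ \dots\ \ge\ \lambda_{n-1}(\mathbf A_\sigma^{-1}\mathbf B)\ >\ 0\ >\ \lambda_n(\mathbf A_\sigma^{-1}\mathbf B)\ \ge\ -1 .$$ In particular, $\mathbf A_\sigma^{-1}\mathbf B$ has exactly one negative eigenvalue.
   Context: Let $\mathbf L\in\mathbb R^{n\times n}$ be the periodic discrete one-dimensional Laplacian, i.e. $(\mathbf L\mathbf x)_i=x_{i-1}-2x_i+x_{i+1}$ with indices taken modulo $n$. For $n\ge3$ this is the circulant matrix with $-2$ on the diagonal and $1$ on the sub- and superdiagonal and in the corners $(1,n),(n,1)$. For $\sigma\ge 0$ set $\mathbf A_\sigma=\mathbf I-\sigma\mathbf L$, which is symmetric positive definite. Let $\mathbf B=\mathrm{diag}(1,\dots,1,-1)\in\mathbb R^{n\times n}$. *)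

From HB Require Import structures.
From mathcomp Require Import all_boot all_order all_algebra.
Set Implicit Arguments. Unset Strict Implicit. Unset Printing Implicit Defensive.
Import Order.TTheory GRing.Theory Num.Theory.
Local Open Scope ring_scope.

(* Periodic discrete 1D Laplacian: (L x)_i = x_{i-1} - 2 x_i + x_{i+1},
   indices modulo n (ord_pred / ordS are the cyclic predecessor/successor). *)
Definition perLap (R : nzRingType) (n : nat) : 'M[R]_n :=
  \matrix_(i < n, j < n)
    ((j == ord_pred i)%:R - 2%:R * (j == i)%:R + (j == ordS i)%:R).

Definition Asig (R : nzRingType) (n : nat) (sigma : R) : 'M[R]_n :=
  1%:M - sigma *: perLap R n.

Definition Bmat (R : nzRingType) (n : nat) : 'M[R]_n :=
  diag_mx (\row_(i < n) (if (i : nat) == n.-1 then -1 else 1)).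

From HB Require Import structures.
From mathcomp Require Import all_boot all_order all_algebra.
From mathcomp Require Import perm ring complex.
Set Implicit Arguments. Unset Strict Implicit. Unset Printing Implicit Defensive.
Import Order.TTheory GRing.Theory Num.Theory.
Local Open Scope ring_scope.

(* A_sigma is symmetric with x A_sigma x^T >= |x|^2,
   while |x B x^T| <= |x|^2.  Simultaneously diagonalising the pencil
   (A_sigma, B), P A_sigma P^T = I and P B P^T = diag d, makes the columns
   of P^T a basis of eigenvectors of A_sigma^-1 B with eigenvalues
   d_k = p_k B p_k^T, where the row p_k of P has p_k A_sigma p_k^T = 1; hence
   |d_k| <= 1.  As e_n B e_n^T = -1, some d_k is negative; as the form of B
   is positive definite on the hyperplane x_n = 0, which meets every plane,
   at most one d_k is nonpositive.  The simultaneous diagonalisation is by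
   induction on n: the eigenvalues of B A^-1 are real, being quotients of
   Hermitian forms of B and A, and one recurses on the A-orthogonal
   complement of a real eigenvector. *)

Definition qform (K : nzRingType) n (A : 'M[K]_n) (x : 'rV[K]_n) : K :=
  (x *m A *m x^T) 0 0.

Definition posdefmx (K : numDomainType) n (A : 'M[K]_n) :=
  forall x : 'rV[K]_n, x != 0 -> 0 < qform A x.

Lemma sum_delta_mulr (K : nzSemiRingType) n (k : 'I_n) (f : 'I_n -> K) :
  \sum_j (j == k)%:R * f j = f k.
Proof.
rewrite (bigD1 k) //= eqxx mul1r big1 ?addr0 // => j /negPf ->.
by rewrite mul0r.
Qed.

Lemma qform_row (K : comNzRingType) m n (X : 'M[K]_(m, n)) (A : 'M_n) k :
  qform A (row k X) = (X *m A *m X^T) k k.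
Proof.
rewrite /qform !mxE; apply: eq_bigr => j _; rewrite !mxE; congr (_ * _).
by apply: eq_bigr => l _; rewrite !mxE.
Qed.

Lemma qformZ (K : comNzRingType) n (A : 'M[K]_n) (a : K) x :
  qform A (a *: x) = a ^+ 2 * qform A x.
Proof. by rewrite /qform linearZ /= -scalemxAr -!scalemxAl !mxE mulrA expr2. Qed.

Lemma qform_diag (K : comNzRingType) n (d x : 'rV[K]_n) :
  qform (diag_mx d) x = \sum_i x 0 i ^+ 2 * d 0 i.
Proof.
by rewrite /qform mul_mx_diag mxE; apply: eq_bigr => i _; rewrite !mxE expr2 mulrAC.
Qed.

Lemma qform_congr_diag (K : comNzRingType) n (B P : 'M[K]_n) (d c : 'rV[K]_n) :
  P *m B *m P^T = diag_mx d -> qform B (c *m P) = \sum_i c 0 i ^+ 2 * d 0 i.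
Proof. by move=> PBP; rewrite -qform_diag -PBP /qform trmx_mul !mulmxA. Qed.

Lemma sum_sqr_gt0 (K : realDomainType) n (x : 'rV[K]_n) :
  x != 0 -> 0 < \sum_i x 0 i ^+ 2.
Proof.
move=> xn0; rewrite lt_def sumr_ge0 ?andbT => [|i _]; last exact: sqr_ge0.
apply: contra xn0; rewrite psumr_eq0 => [/allP x0|i _]; last exact: sqr_ge0.
apply/eqP/matrixP => a i; rewrite ord1 mxE.
by apply/eqP; rewrite -sqrf_eq0; apply: (implyP (x0 i _)); rewrite ?mem_index_enum.
Qed.

Section PosDef.
Variable K : numFieldType.

Lemma posdef_qform_ge0 n (A : 'M[K]_n) x : posdefmx A -> 0 <= qform A x.
Proof.
move=> pdA; have [->|xn0] := eqVneq x 0; last exact/ltW/pdA.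
by rewrite /qform !mul0mx mxE.
Qed.

Lemma posdef_unitmx n (A : 'M[K]_n) : posdefmx A -> A \in unitmx.
Proof.
move=> pdA; rewrite unitmxE unitfE; apply/negP => /det0P [x xn0 xA0].
by have := pdA x xn0; rewrite /qform xA0 mul0mx mxE ltxx.
Qed.

Lemma posdef_congr m n (A : 'M[K]_n) (W : 'M[K]_(m, n)) :
  (forall x : 'rV_m, x *m W = 0 -> x = 0) -> posdefmx A -> posdefmx (W *m A *m W^T).
Proof.
move=> Winj pdA x xn0; have xWn0 : x *m W != 0 := contra_neq (@Winj x) xn0.
by have := pdA _ xWn0; rewrite /qform trmx_mul !mulmxA.
Qed.

End PosDef.

Definition deflate_mx (K : fieldType) n (k : 'I_n.+1) (u : 'cV[K]_n.+1) :
    'M[K]_(n, n.+1) :=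
  \matrix_(j, i) ((i == lift k j)%:R - (i == k)%:R * (u (lift k j) 0 / u k 0)).

Lemma deflate_mx_mul (K : fieldType) n k (u : 'cV[K]_n.+1) :
  u k 0 != 0 -> deflate_mx k u *m u = 0.
Proof.
move=> uk; apply/matrixP => j z; rewrite ord1 !mxE.
under eq_bigr => i _ do rewrite !mxE mulrBl -mulrA.
by rewrite sumrB !sum_delta_mulr mulfVK // subrr.
Qed.

Lemma deflate_mx_inj (K : fieldType) n k (u : 'cV[K]_n.+1) (x : 'rV[K]_n) :
  x *m deflate_mx k u = 0 -> x = 0.
Proof.
move=> xW0; apply/matrixP => z j; rewrite ord1.
have := congr1 (fun y : 'rV[K]_n.+1 => y 0 (lift k j)) xW0; rewrite !mxE => <-.
under eq_bigr => i _ do rewrite !mxE (inj_eq lift_inj) [lift k j == k]eq_sym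
  (negbTE (neq_lift k j)) mul0r subr0 mulrC eq_sym.
by rewrite sum_delta_mulr.
Qed.

Lemma congr_diag_block (K : comNzRingType) n (A B : 'M[K]_n.+1) v
    (Q : 'M_(n, n.+1)) (l : K) (d : 'rV_n) :
  A^T = A -> B^T = B -> v *m A *m v^T = 1%:M -> v *m B = l *: (v *m A) ->
  v *m A *m Q^T = 0 -> Q *m A *m Q^T = 1%:M -> Q *m B *m Q^T = diag_mx d ->
  let P := col_mx v Q in
  P *m A *m P^T = 1%:M /\ P *m B *m P^T = diag_mx (row_mx l%:M d).
Proof.
move=> sA sB vAv vB vAQ QAQ QBQ P.
have QAv : Q *m A *m v^T = 0.
  by apply: trmx_inj; rewrite trmx0 !trmx_mul trmxK sA mulmxA.
have vBQ : v *m B *m Q^T = 0 by rewrite vB -scalemxAl vAQ scaler0.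
have QBv : Q *m B *m v^T = 0.
  by apply: trmx_inj; rewrite trmx0 !trmx_mul trmxK sB mulmxA.
have vBv : v *m B *m v^T = l%:M by rewrite vB -scalemxAl vAv scalemx1.
rewrite /P tr_col_mx; split; rewrite mul_col_mx mul_col_row.
  by rewrite vAv vAQ QAv QAQ -scalar_mx_block.
rewrite vBv vBQ QBv QBQ diag_mx_row; congr block_mx.
by apply/matrixP => i j; rewrite !ord1 !mxE.
Qed.

Lemma exists_pair_combination_col0 (K : fieldType) m n (P : 'M[K]_(m, n)) j k l :
  k != l -> exists c : 'rV_m,
    [/\ c != 0, (c *m P) 0 j = 0 & forall i, c 0 i != 0 -> (i == k) || (i == l)].
Proof.
move=> kl; pose a := if P k j == 0 then 1 else P l j.
pose b := if P k j == 0 then 0 else - P k j.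
have cE i : (a *: 'e_k + b *: 'e_l) 0 i = a * (i == k)%:R + b * (i == l)%:R.
  by rewrite !mxE.
exists (a *: 'e_k + b *: 'e_l); split.
- apply/negP => /eqP/matrixP c0; have := c0 0 k; have := c0 0 l.
  rewrite !cE !mxE !eqxx (negbTE kl) eq_sym (negbTE kl) !mulr0 !mulr1 addr0 add0r /a /b.
  by case: eqP => [_ _ /eqP|/eqP Pkj /eqP]; rewrite ?oner_eq0 ?oppr_eq0 ?(negbTE Pkj).
- by rewrite mulmxDl -!scalemxAl -!rowE !mxE /a /b; case: ifP => [/eqP ->|_]; ring.
- move=> i; rewrite cE; apply: contraR; rewrite negb_or => /andP[/negPf -> /negPf ->].
  by rewrite !mulr0 addr0.
Qed.

Section Pencil.
Variable R : rcfType.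
Local Notation C := R[i].
Local Notation toC := (real_complex R).

Lemma hermitian_form_sym n (A : 'M[R]_n) (w : 'rV[C]_n) : A^T = A ->
  (w *m map_mx toC A *m (map_mx conjc w)^T) 0 0 =
  toC (qform A (map_mx (@complex.Re R) w) + qform A (map_mx (@complex.Im R) w)).
Proof.
move=> sA; set x := map_mx _ w; set y := map_mx _ w.
set X := map_mx toC x; set Y := map_mx toC y; set A' := map_mx toC A.
have wE : w = X + 'i%C *: Y by apply/matrixP => i j; rewrite !mxE [LHS]complexE.
have wcE : map_mx conjc w = X - 'i%C *: Y.
  apply/matrixP => i j; rewrite !mxE; case: (w i j) => a b /=.
  by apply/eqP; rewrite eq_complex /= !(mul0r, mul1r, oppr0, subr0, add0r, sub0r) !eqxx.
have cross : Y *m A' *m X^T = X *m A' *m Y^T.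
  have -> : Y *m A' *m X^T = (Y *m A' *m X^T)^T.
    by apply/matrixP => i j; rewrite !ord1 [RHS]mxE.
  rewrite !trmx_mul trmxK mulmxA; congr (_ *m _ *m _).
  by apply/matrixP => i j; rewrite !mxE -[in RHS]sA mxE.
have toC_form z : (map_mx toC z *m A' *m (map_mx toC z)^T) 0 0 = toC (qform A z).
  by rewrite /qform map_trmx -!map_mxM mxE.
rewrite wcE {1}wE linearB /= linearZ /= mulmxDl mulmxBr -!scalemxAl -!scalemxAr.
rewrite !mulmxDl -!scalemxAl cross scalerDr scalerA -expr2 sqr_i scaleN1r.
by rewrite opprD addrA addrK opprK [LHS]mxE !toC_form rmorphD.
Qed.

Lemma posdef_hermitian_form_gt0 n (A : 'M[R]_n) (w : 'rV[C]_n) :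
  posdefmx A -> w != 0 ->
  0 < qform A (map_mx (@complex.Re R) w) + qform A (map_mx (@complex.Im R) w).
Proof.
move=> pdA wn0; have [x0|xn0] := eqVneq (map_mx (@complex.Re R) w) 0; last first.
  by apply: (lt_le_trans (pdA _ xn0)); rewrite lerDl posdef_qform_ge0.
rewrite x0 {1}/qform !mul0mx mxE add0r; apply: pdA.
apply: contra_neq wn0 => y0; apply/matrixP => i j.
move/matrixP/(_ i j): x0; move/matrixP/(_ i j): y0; rewrite !mxE => y0 x0.
by rewrite [LHS]complexE x0 y0 mulr0 addr0.
Qed.

(* The eigenvalue [z] of [B A^-1] over [R[i]] is real: it is the quotient of
   the Hermitian forms of [B] and [A] at its eigenvector. *)
Lemma pencil_real_eigenvector n (A B : 'M[R]_n.+1) :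
  A^T = A -> B^T = B -> posdefmx A ->
  exists (l : R) (v : 'rV_n.+1), v != 0 /\ v *m B = l *: (v *m A).
Proof.
move=> sA sB pdA; have Au := posdef_unitmx pdA.
pose M := B *m invmx A.
have [z /eigenvalueP [w wM wn0]] : exists z, eigenvalue (map_mx toC M) z.
  have /closed_rootP [z rz] : size (char_poly (map_mx toC M)) != 1%N.
    by rewrite size_char_poly.
  by exists z; rewrite eigenvalue_root_char.
have wB : w *m map_mx toC B = z *: (w *m map_mx toC A).
  by rewrite scalemxAl -wM map_mxM map_invmx mulmxA mulmxKV ?map_unitmx.
have := congr1 (fun y => (y *m (map_mx conjc w)^T) 0 0) wB.
rewrite /= -scalemxAl [RHS]mxE !hermitian_form_sym //.
have := posdef_hermitian_form_gt0 pdA wn0.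
set qA := _ + _; set qB := _ + _ => qA_gt0 qBA.
have zE : z = toC (qB / qA) by rewrite fmorph_div /= qBA mulfK // fmorph_eq0 gt_eqF.
have : eigenvalue M (qB / qA).
  rewrite -(eigenvalue_map (real_complex R)).
  by apply/eigenvalueP; exists w; rewrite // wM zE.
case/eigenvalueP => v vM vn0; exists (qB / qA), v; split=> //.
by rewrite scalemxAl -vM /M mulmxA mulmxKV.
Qed.

Lemma pencil_unit_eigenvector n (A B : 'M[R]_n.+1) :
  A^T = A -> B^T = B -> posdefmx A ->
  exists (l : R) (v : 'rV_n.+1), v *m A *m v^T = 1%:M /\ v *m B = l *: (v *m A).
Proof.
move=> sA sB pdA; have [l [v [vn0 vB]]] := pencil_real_eigenvector sA sB pdA.
have c_gt0 := pdA v vn0; set c := qform A v in c_gt0.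
exists l, ((Num.sqrt c)^-1 *: v); split; last by rewrite -!scalemxAl vB !scalerA mulrC.
rewrite [LHS]mx11_scalar; congr _%:M; change (qform A ((Num.sqrt c)^-1 *: v) = 1).
by rewrite qformZ exprVn sqr_sqrtr ?ltW // mulVf ?gt_eqF.
Qed.

Lemma simultaneous_diag n (A B : 'M[R]_n) : A^T = A -> B^T = B -> posdefmx A ->
  exists (P : 'M[R]_n) (d : 'rV[R]_n),
    P *m A *m P^T = 1%:M /\ P *m B *m P^T = diag_mx d.
Proof.
elim: n A B => [|n IH] A B sA sB pdA.
  by exists 0, 0; split; apply/matrixP => [[]].
(* Normalise an eigenvector v of the pencil; the rows of W span the
   A-orthogonal complement of v, on which we recurse. *)
have [l [v [vAv vB]]] := pencil_unit_eigenvector sA sB pdA.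
set u := A *m v^T.
have /existsP [k uk] : [exists k, u k 0 != 0].
  rewrite -negb_forall; apply/forallP => u0.
  have u_eq0 : u = 0 by apply/matrixP => i j; rewrite ord1 [RHS]mxE; apply/eqP/u0.
  move: vAv; rewrite -mulmxA -/u u_eq0 mulmx0 => /matrixP/(_ 0 0).
  by rewrite !mxE eqxx => /eqP; rewrite eq_sym oner_eq0.
pose W := deflate_mx k u.
have Wu : W *m u = 0 := deflate_mx_mul uk.
have sym_congr (X : 'M_n.+1) : X^T = X -> (W *m X *m W^T)^T = W *m X *m W^T.
  by move=> sX; rewrite !trmx_mul trmxK sX mulmxA.
have [P1 [d1 [P1A P1B]]] := IH _ _ (sym_congr _ sA) (sym_congr _ sB)
  (posdef_congr (@deflate_mx_inj _ _ k u) pdA).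
exists (col_mx v (P1 *m W)), (row_mx l%:M d1); apply: congr_diag_block => //.
- by apply: trmx_inj; rewrite trmx0 !trmx_mul !trmxK sA -mulmxA -/u Wu mulmx0.
- by rewrite trmx_mul !mulmxA -P1A !mulmxA.
- by rewrite trmx_mul !mulmxA -P1B !mulmxA.
Qed.

End Pencil.

Section PencilDiag.
Variables (R : realFieldType) (n : nat) (A B P : 'M[R]_n) (d : 'rV[R]_n).
Hypotheses (PAP : P *m A *m P^T = 1%:M) (PBP : P *m B *m P^T = diag_mx d).

Let PAP_unit : P \in unitmx /\ A *m P^T \in unitmx.
Proof. by apply: mulmx1_unit; rewrite mulmxA. Qed.

Lemma pencil_diag_unitmx : P \in unitmx.
Proof. by case: PAP_unit. Qed.

Lemma pencil_diag_eigenvectors : invmx A *m B *m P^T = P^T *m diag_mx d.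
Proof.
have [Pu APu] := PAP_unit.
have Au : A \in unitmx by move: APu; rewrite unitmx_mul => /andP[].
have AP : A *m P^T = invmx P by rewrite -[LHS](mulKmx Pu) (mulmxA P) PAP mulmx1.
have BP : B *m P^T = invmx P *m diag_mx d by rewrite -PBP !mulmxA mulVmx // mul1mx.
by rewrite -mulmxA BP -AP !mulmxA mulVmx // mul1mx.
Qed.

Lemma pencil_diag_norm_le1 :
  (forall x, `|qform B x| <= qform A x) -> forall k, `|d 0 k| <= 1.
Proof.
move=> BA k; have := BA (row k P).
by rewrite !qform_row PAP PBP !mxE eqxx !mulr1n.
Qed.

Lemma pencil_diag_neg : (exists x, qform B x < 0) -> exists k, d 0 k < 0.
Proof.
case=> x xB; apply/existsP; apply: contraTT xB; rewrite negb_exists => /forallP d_ge0.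
rewrite -leNgt -[x](mulmxKV pencil_diag_unitmx) (qform_congr_diag _ PBP).
by rewrite sumr_ge0 // => i _; rewrite mulr_ge0 ?sqr_ge0 // leNgt d_ge0.
Qed.

Lemma pencil_diag_qform_le0 (c : 'rV_n) :
  (forall i, c 0 i != 0 -> d 0 i <= 0) -> qform B (c *m P) <= 0.
Proof.
move=> c_supp; rewrite (qform_congr_diag _ PBP) sumr_le0 // => i _.
have [->|ci] := eqVneq (c 0 i) 0; first by rewrite expr0n mul0r.
by rewrite mulr_ge0_le0 ?sqr_ge0 ?c_supp.
Qed.

Lemma pencil_diag_nonpos_uniq (j : 'I_n) :
  (forall x : 'rV_n, x != 0 -> x 0 j = 0 -> 0 < qform B x) ->
  forall k l, d 0 k <= 0 -> d 0 l <= 0 -> k = l.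
Proof.
move=> Bpos k l dk dl; apply/eqP/negPn/negP => kl.
have [c [cn0 cPj c_supp]] := exists_pair_combination_col0 P j kl.
have cPn0 : c *m P != 0.
  by apply: contra_neq cn0 => cP0; rewrite -[c](mulmxK pencil_diag_unitmx) cP0 mul0mx.
have := Bpos _ cPn0 cPj; rewrite ltNge pencil_diag_qform_le0 // => i /c_supp.
by case/orP => /eqP ->.
Qed.

End PencilDiag.

Section Eigenvalues.
Variables (F : fieldType) (n : nat).

Lemma eigenvalue_diag_mx (d : 'rV[F]_n) a :
  eigenvalue (diag_mx d) a = (a \in codom (fun i => d 0 i)).
Proof.
rewrite eigenvalue_root_char char_poly_trig ?diag_mx_is_trig // -root_prod_XsubC.
by rewrite big_image /=; congr root; apply: eq_bigr => i _; rewrite mxE eqxx.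
Qed.

Lemma eigenvalue_similar (M D P : 'M[F]_n) :
  P \in unitmx -> M *m P = P *m D -> eigenvalue M =1 eigenvalue D.
Proof.
move=> Pu MP a; apply/eigenvalueP/eigenvalueP => [[v vM vn0]|[w wD wn0]].
  exists (v *m P); first by rewrite -mulmxA -MP mulmxA vM scalemxAl.
  by apply: contra_neq vn0 => vP0; rewrite -[v](mulmxK Pu) vP0 mul0mx.
exists (w *m invmx P).
  by rewrite -[M](mulmxK Pu) MP !mulmxA mulmxKV // wD scalemxAl.
by apply: contra_neq wn0 => wP0; rewrite -[w](mulmxKV Pu) wP0 mul0mx.
Qed.

End Eigenvalues.

Lemma exists_perm_nonincreasing (R : realDomainType) n (f : 'I_n -> R) :
  exists s : 'S_n, forall i j : 'I_n, (i <= j)%N -> f (s j) <= f (s i).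
Proof.
case: n f => [|m] f; first by exists 1%g => -[].
pose r i j := f j <= f i.
pose ss := sort r (enum 'I_m.+1).
have ss_size : size ss = m.+1 by rewrite size_sort size_enum_ord.
have ss_uniq : uniq ss by rewrite sort_uniq enum_uniq.
pose g (i : 'I_m.+1) := nth ord0 ss i.
have g_inj : injective g.
  by move=> i j /eqP; rewrite /g nth_uniq ?ss_size // => /eqP; exact: val_inj.
exists (perm g_inj) => i j ij; rewrite !permE /g.
have r_trans : transitive r by move=> x y z ryx rxz; exact: le_trans rxz ryx.
have ss_sorted : sorted r ss by apply: sort_sorted => x y; exact: le_total.
by apply: (sorted_leq_nth r_trans (fun=> lexx _) ord0 ss_sorted); rewrite ?inE ?ss_size.
Qed.

Lemma col_perm_diag_mx (K : comNzRingType) n (M P : 'M[K]_n) (d : 'rV[K]_n) s :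
  M *m P = P *m diag_mx d ->
  M *m col_perm s P = col_perm s P *m diag_mx (\row_i d 0 (s i)).
Proof.
move=> MP; apply/matrixP => i j; rewrite mul_mx_diag !mxE.
move/matrixP/(_ i (s j)): MP; rewrite mul_mx_diag !mxE => <-.
by apply: eq_bigr => l _; rewrite !mxE.
Qed.

Lemma nonincreasing_single_nonpos (R : realDomainType) n (lam : 'I_n.+1 -> R) :
  (forall i j : 'I_n.+1, (i <= j)%N -> lam j <= lam i) ->
  (exists k, lam k < 0) -> (forall k l, lam k <= 0 -> lam l <= 0 -> k = l) ->
  lam ord_max < 0 /\ forall i, i != ord_max -> 0 < lam i.
Proof.
move=> lam_dec [k lam_k] lam_uniq.
have lam_max : lam ord_max < 0 := le_lt_trans (lam_dec k ord_max (leq_ord k)) lam_k.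
split=> // i /eqP i_max; rewrite ltNge; apply/negP => lam_i.
by apply/i_max/lam_uniq => //; exact: ltW.
Qed.

Lemma perLap_mul_col (K : comNzRingType) n (v : 'rV[K]_n) i :
  (perLap K n *m v^T) i 0 = v 0 (ord_pred i) - 2%:R * v 0 i + v 0 (ordS i).
Proof.
rewrite mxE.
under eq_bigr => j _ do rewrite !mxE mulrDl mulrBl -mulrA.
by rewrite big_split sumrB /= !sum_delta_mulr -mulr_sumr sum_delta_mulr.
Qed.

(* Summation by parts on the cycle: [ordS] permutes ['I_n]. *)
Lemma perLap_qform (K : comNzRingType) n (x : 'rV[K]_n) :
  qform (perLap K n) x = - \sum_i (x 0 (ordS i) - x 0 i) ^+ 2.
Proof.
rewrite /qform -mulmxA mxE.
under eq_bigr => i _ do rewrite perLap_mul_col.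
have shift_pred : \sum_i x 0 i * x 0 (ord_pred i) = \sum_i x 0 (ordS i) * x 0 i.
  rewrite (reindex_inj (can_inj (@ordSK n))) /=.
  by apply: eq_bigr => i _; rewrite ordSK.
have shift_sq : \sum_i x 0 (ordS i) ^+ 2 = \sum_i x 0 i ^+ 2.
  by rewrite [RHS](reindex_inj (can_inj (@ordSK n))).
have -> : \sum_i x 0 i * (x 0 (ord_pred i) - 2%:R * x 0 i + x 0 (ordS i)) =
    \sum_i x 0 i * x 0 (ord_pred i) - 2%:R * \sum_i x 0 i ^+ 2
    + \sum_i x 0 (ordS i) * x 0 i.
  rewrite mulr_sumr -sumrB -big_split /=; apply: eq_bigr => i _; ring.
have -> : \sum_i (x 0 (ordS i) - x 0 i) ^+ 2 =
    \sum_i x 0 (ordS i) ^+ 2 - 2%:R * \sum_i x 0 (ordS i) * x 0 i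
    + \sum_i x 0 i ^+ 2.
  rewrite mulr_sumr -sumrB -big_split /=; apply: eq_bigr => i _; ring.
rewrite shift_pred shift_sq; ring.
Qed.

Lemma Asig_qform (K : comNzRingType) n (s : K) (x : 'rV[K]_n) :
  qform (Asig n s) x = \sum_i x 0 i ^+ 2 + s * \sum_i (x 0 (ordS i) - x 0 i) ^+ 2.
Proof.
rewrite /qform /Asig mulmxBr mulmx1 -scalemxAr mulmxBl -scalemxAl.
rewrite [LHS]mxE [X in _ + X]mxE [X in _ - X]mxE -/(qform _ x) perLap_qform.
rewrite mulrN opprK mxE; congr (_ + _).
by apply: eq_bigr => i _; rewrite mxE expr2.
Qed.

Lemma perLap_tr (K : nzRingType) n : (perLap K n)^T = perLap K n.
Proof.
apply/matrixP => i j; rewrite !mxE.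
have -> : (i == ord_pred j) = (j == ordS i).
  by apply/eqP/eqP => [->|->]; rewrite ?ord_predK ?ordSK.
have -> : (i == ordS j) = (j == ord_pred i).
  by apply/eqP/eqP => [->|->]; rewrite ?ord_predK ?ordSK.
by rewrite (eq_sym i j) addrC addrA addrAC.
Qed.

Lemma Asig_tr (K : nzRingType) n (s : K) : (Asig n s)^T = Asig n s.
Proof. by rewrite /Asig linearB /= linearZ /= tr_scalar_mx perLap_tr. Qed.

Lemma Bmat_tr (K : nzRingType) n : (Bmat K n)^T = Bmat K n.
Proof. exact: tr_diag_mx. Qed.

Lemma Bmat_qform (K : comNzRingType) n (x : 'rV[K]_n) :
  qform (Bmat K n) x = \sum_i x 0 i ^+ 2 * (if (i : nat) == n.-1 then -1 else 1).
Proof. by rewrite qform_diag; apply: eq_bigr => i _; rewrite mxE. Qed.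

Section AsigBmatReal.
Variables (R : realDomainType) (n : nat).

Lemma Asig_qform_ge (s : R) (x : 'rV[R]_n) : 0 <= s -> \sum_i x 0 i ^+ 2 <= qform (Asig n s) x.
Proof. by move=> s_ge0; rewrite Asig_qform lerDl mulr_ge0 ?sumr_ge0 // => i _; exact: sqr_ge0. Qed.

Lemma Asig_posdef (s : R) : 0 <= s -> posdefmx (Asig n s).
Proof. by move=> s_ge0 x /sum_sqr_gt0 /lt_le_trans; apply; exact: Asig_qform_ge. Qed.

Lemma Bmat_qform_le (x : 'rV[R]_n) : `|qform (Bmat R n) x| <= \sum_i x 0 i ^+ 2.
Proof.
rewrite Bmat_qform (le_trans (ler_norm_sum _ _ _)) // ler_sum // => i _.
by case: ifP => _; rewrite ?mulrN1 ?mulr1 ?normrN ger0_norm ?sqr_ge0.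
Qed.

Lemma Bmat_qform_gt0 (j : 'I_n) (x : 'rV[R]_n) :
  (j : nat) = n.-1 -> x != 0 -> x 0 j = 0 -> 0 < qform (Bmat R n) x.
Proof.
move=> jE /sum_sqr_gt0 + xj0; rewrite Bmat_qform; congr (0 < _).
apply: eq_bigr => i _; case: ifP => [/eqP iE|_]; last by rewrite mulr1.
by rewrite (_ : i = j) ?xj0 ?expr0n ?mul0r //; apply: val_inj; rewrite /= iE jE.
Qed.

Lemma Bmat_qform_delta (j : 'I_n) :
  (j : nat) = n.-1 -> qform (Bmat R n) (delta_mx 0 j) = -1.
Proof.
by move=> jE; rewrite -row1 qform_row mul1mx trmx1 mulmx1 !mxE eqxx jE eqxx mulr1n.
Qed.

End AsigBmatReal.


Lemma Asig_Bmat_pencil (R : rcfType) n (sigma : R) : 0 <= sigma ->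
  exists (P : 'M[R]_n.+1) (d : 'rV[R]_n.+1),
  [/\ P \in unitmx, invmx (Asig n.+1 sigma) *m Bmat R n.+1 *m P = P *m diag_mx d,
     forall k, -1 <= d 0 k <= 1, exists k, d 0 k < 0
   & forall k l, d 0 k <= 0 -> d 0 l <= 0 -> k = l].
Proof.
move=> sigma_ge0; have [P [d [PAP PBP]]] :=
  simultaneous_diag (Asig_tr n.+1 sigma) (Bmat_tr R n.+1) (Asig_posdef sigma_ge0).
exists P^T, d; split.
- by rewrite unitmx_tr (pencil_diag_unitmx PAP).
- exact: pencil_diag_eigenvectors PAP PBP.
- move=> k; rewrite -ler_norml; apply: (pencil_diag_norm_le1 PAP PBP) => x.
  exact: le_trans (Bmat_qform_le x) (Asig_qform_ge x sigma_ge0).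
- apply: (pencil_diag_neg PAP PBP); exists (delta_mx 0 ord_max).
  by rewrite Bmat_qform_delta ?ltrN10.
- by apply: (pencil_diag_nonpos_uniq PAP PBP (j := ord_max)) => x; apply: Bmat_qform_gt0.
Qed.

Theorem lemma3p1 (R : rcfType) (n : nat) (sigma : R)
    (hn : (2 <= n)%N) (hsigma : 0 <= sigma) :
  let M := invmx (@Asig R n sigma) *m Bmat R n in
  exists (lam : 'I_n -> R) (P : 'M[R]_n),
    (* diagonalizable: the columns of P are eigenvectors forming a basis *)
    (P \in unitmx /\ M *m P = P *m diag_mx (\row_i lam i)) /\
    (* the eigenvalues of M are exactly the lam i *)
    (forall a : R, eigenvalue M a <-> exists i, a = lam i) /\
    (* ordered decreasingly *)
    (forall i j : 'I_n, (i <= j)%N -> lam j <= lam i) /\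
    (* 1 >= lam_1 >= ... >= lam_(n-1) > 0 > lam_n >= -1 *)
    (forall i : 'I_n, lam i <= 1) /\
    (forall i : 'I_n, (i < n.-1)%N -> 0 < lam i) /\
    (forall i : 'I_n, (i : nat) = n.-1 -> lam i < 0 /\ -1 <= lam i) /\
    (* exactly one negative eigenvalue *)
    (exists a : R, (eigenvalue M a /\ a < 0) /\
           forall b : R, eigenvalue M b -> b < 0 -> b = a).
Proof.
case: n hn => [|n] // _ M.
have [P [d [Pu MP d_bounds [k d_k] d_uniq]]] := Asig_Bmat_pencil n hsigma.
have [s s_dec] := exists_perm_nonincreasing (fun i => d 0 i).
pose lam i := d 0 (s i); pose Q := col_perm s P.
have Qu : Q \in unitmx by rewrite /Q col_permE unitmx_mul Pu unitmx_perm.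
have MQ : M *m Q = Q *m diag_mx (\row_i lam i) by exact: col_perm_diag_mx.
have eigM a : eigenvalue M a <-> exists i, a = lam i.
  rewrite (eigenvalue_similar Qu MQ) eigenvalue_diag_mx.
  by split => [/codomP [i ->]|[i ->]]; [exists i|apply/codomP; exists i]; rewrite mxE.
have [lam_max lam_pos] : lam ord_max < 0 /\ forall i, i != ord_max -> 0 < lam i.
  apply: nonincreasing_single_nonpos => // [|i j lam_i lam_j].
    by exists (s^-1 k)%g; rewrite /lam permKV.
  by apply: (@perm_inj _ s); apply: d_uniq.
exists lam, Q; do 3 (split; first by []).
split; first by move=> i; case/andP: (d_bounds (s i)).
split.
  by move=> i i_lt; apply/lam_pos/eqP => i_max; rewrite i_max ltnn in i_lt.
split.
  move=> i iE; have -> : i = ord_max by apply: val_inj.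
  by case/andP: (d_bounds (s ord_max)).
exists (lam ord_max); split; first by split => //; apply/eigM; exists ord_max.
move=> b /eigM [i ->] lam_i; have [-> //|i_max] := eqVneq i ord_max.
by have := lam_pos i i_max; rewrite ltNge (ltW lam_i).
Qed.
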